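(* Let $\beta$ be a basis set of monomials in $x_1,\dots,x_r$, let $c^{\mathbf d}_{\mathbf j}$ be an arbitrary arrow for $\beta$, and let $\mathbf x^{\mathbf b}$ be a minimal generator of $I_\beta$ with $\mathbf x^{\mathbf b}\mid\mathbf x^{\mathbf d}$. Then either $c^{\mathbf d}_{\mathbf j}\sim0$ or $c^{\mathbf d}_{\mathbf j}\sim c^{\mathbf b}_{\mathbf j_1}$ for some $\mathbf x^{\mathbf j_1}\in\beta$.
   Context: Monomials are identified with exponent vectors in $\mathbb Z_{\ge0}^r$. A basis set is a finite nonempty set $\beta$ of monomials closed under taking divisors; $I_\beta$ is the ideal generated by monomials not in $\beta$. An arrow $c^{\mathbf d}_{\mathbf j}$ for $\beta$ is a pair $(\mathbf d,\mathbf j)$ with tail $\mathbf x^{\mathbf d}\notin\beta$ and head $\mathbf x^{\mathbf j}\in\beta$. A translation step replaces $(\mathbf d,\mathbf j)$ by $(\mathbf d\pm e_i,\mathbf j\pm e_i)$ provided the result is again an arrow (nonnegative exponents, head in $\beta$, tail not in $\beta$); $\sim$ is the equivalence relation generated by steps. $c\sim0$ means $c$ is translation-equivalent to an arrow $(\mathbf d',\mathbf j')$ with, for some $i$, $j'_i=0$, $d'_i\ge1$ and $\mathbf x^{\mathbf d'-e_i}\notin\beta$. *)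

From mathcomp Require Import all_boot.
From Stdlib Require Import Relation_Operators.
Set Implicit Arguments. Unset Strict Implicit. Unset Printing Implicit Defensive.

(* Monomials in x_1..x_r are exponent vectors in Z_{>=0}^r. *)
Definition mono (r : nat) := {ffun 'I_r -> nat}.

Definition unitv r (i : 'I_r) : mono r := [ffun k => nat_of_bool (k == i)].
Definition addm r (a b : mono r) : mono r := [ffun k => a k + b k].

Definition mdivides r (a b : mono r) : Prop := forall k, a k <= b k.

Definition basis_set r (beta : seq (mono r)) : Prop :=
  beta != [::] /\
  forall m m' : mono r, m \in beta -> mdivides m' m -> m' \in beta.

(* Monomial membership in I_beta = ideal generated by the monomials not in beta. *)
Definition in_Ibeta r (beta : seq (mono r)) (m : mono r) : Prop :=
  exists g : mono r, g \notin beta /\ mdivides g m.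

Definition min_gen r (beta : seq (mono r)) (b : mono r) : Prop :=
  in_Ibeta beta b /\
  forall m : mono r, mdivides m b -> m <> b -> ~ in_Ibeta beta m.

(* Arrow (d, j): tail x^d not in beta, head x^j in beta. *)
Definition is_arrow r (beta : seq (mono r)) (c : mono r * mono r) : Prop :=
  c.1 \notin beta /\ c.2 \in beta.

Definition tstep r (beta : seq (mono r)) (c c' : mono r * mono r) : Prop :=
  is_arrow beta c /\ is_arrow beta c' /\
  exists i : 'I_r,
    (c'.1 = addm c.1 (unitv i) /\ c'.2 = addm c.2 (unitv i)) \/
    (c.1 = addm c'.1 (unitv i) /\ c.2 = addm c'.2 (unitv i)).

Definition tequiv r (beta : seq (mono r)) : mono r * mono r -> mono r * mono r -> Prop :=
  clos_refl_sym_trans _ (tstep beta).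

Definition equiv_zero r (beta : seq (mono r)) (c : mono r * mono r) : Prop :=
  exists (d' j' : mono r) (i : 'I_r),
    is_arrow beta (d', j') /\ tequiv beta c (d', j') /\
    j' i = 0 /\ 1 <= d' i /\
    (forall m : mono r, d' = addm m (unitv i) -> m \notin beta).

(** Descend from the tail [d] to [b] one coordinate at a time, picking [i]
    with [b i < d i].  Every multiple of [b] lies in [I_beta], hence outside
    [beta], so [x^(d - e_i)] is again a tail.  If [j i = 0] the arrow is
    already [~ 0]; otherwise translating by [-e_i] gives an equivalent arrow
    whose tail is closer to [b]. *)
From Stdlib Require Import Relation_Operators.
From mathcomp Require Import all_boot.
Set Implicit Arguments. Unset Strict Implicit. Unset Printing Implicit Defensive.

Definition predm r (a : mono r) (i : 'I_r) : mono r :=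
  [ffun k => a k - nat_of_bool (k == i)].

Definition mdeg r (a : mono r) : nat := \sum_k a k.

Section MonomialArithmetic.

Variable r : nat.
Implicit Types (a b m : mono r) (i : 'I_r).

Lemma predmK a i : 0 < a i -> addm (predm a i) (unitv i) = a.
Proof.
move=> a_i_gt0; apply/ffunP=> k; rewrite !ffunE.
by case: eqVneq => [->|_]; rewrite ?subnK ?subn0 ?addn0.
Qed.

Lemma addmK_unitv m i : predm (addm m (unitv i)) i = m.
Proof. by apply/ffunP=> k; rewrite !ffunE addnK. Qed.

Lemma mdivides_trans a b m : mdivides a b -> mdivides b m -> mdivides a m.
Proof. by move=> ab bm k; exact: leq_trans (ab k) (bm k). Qed.

Lemma mdivides_predm a i : mdivides (predm a i) a.
Proof. by move=> k; rewrite ffunE leq_subr. Qed.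

Lemma mdivides_predm_strict b a i :
  mdivides b a -> b i < a i -> mdivides b (predm a i).
Proof.
move=> ba lt_i k; rewrite ffunE; case: eqVneq => [->|_] /=.
  by rewrite subn1 -ltnS prednK // (leq_ltn_trans _ lt_i).
by rewrite subn0.
Qed.

Lemma mdivides_anti b a : mdivides b a -> ~~ [exists i, b i < a i] -> a = b.
Proof.
move=> ba /existsPn not_lt; apply/ffunP=> k; apply/eqP.
by rewrite eqn_leq ba andbT leqNgt not_lt.
Qed.

Lemma mdeg_addm_unitv m i : mdeg (addm m (unitv i)) = (mdeg m).+1.
Proof.
rewrite /mdeg (eq_bigr (fun k => m k + (k == i))) => [|k _]; last by rewrite !ffunE.
rewrite big_split /= -addn1; congr (_ + _).
by rewrite (bigD1 i) //= eqxx big1 // => k /negbTE ->.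
Qed.

Lemma mdeg_predm a i : 0 < a i -> mdeg (predm a i) < mdeg a.
Proof. by move=> a_i_gt0; rewrite -{2}(predmK a_i_gt0) mdeg_addm_unitv. Qed.

End MonomialArithmetic.

Section Arrows.

Variables (r : nat) (beta : seq (mono r)).
Hypothesis beta_closed :
  forall m m' : mono r, m \in beta -> mdivides m' m -> m' \in beta.

Lemma in_Ibeta_notin m : in_Ibeta beta m -> m \notin beta.
Proof.
by case=> g [g_notin gm]; apply: contra g_notin => m_in; exact: beta_closed gm.
Qed.

Lemma in_Ibeta_mdivides b m : in_Ibeta beta b -> mdivides b m -> in_Ibeta beta m.
Proof.
by case=> g [g_notin gb] bm; exists g; split; last exact: mdivides_trans gb bm.
Qed.

Lemma tstep_predm d j i :
  is_arrow beta (d, j) -> predm d i \notin beta -> 0 < d i -> 0 < j i ->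
  tstep beta (d, j) (predm d i, predm j i).
Proof.
move=> [d_notin j_in] dpred_notin d_i_gt0 j_i_gt0.
have jpred_in : predm j i \in beta by apply: beta_closed j_in (mdivides_predm _ _).
do 2!split=> //; exists i; right.
by rewrite /= !predmK.
Qed.

Lemma equiv_zero_head0 d j i :
  is_arrow beta (d, j) -> j i = 0 -> 0 < d i -> predm d i \notin beta ->
  equiv_zero beta (d, j).
Proof.
move=> arr j_i0 d_i_gt0 dpred_notin; exists d, j, i.
split=> //; split; first exact: rst_refl.
do 2!split=> //; move=> m d_eq.
by rewrite d_eq addmK_unitv in dpred_notin.
Qed.

Lemma equiv_zero_tequiv c c' :
  tequiv beta c c' -> equiv_zero beta c' -> equiv_zero beta c.
Proof.
move=> cc' [d' [j' [i [arr [c'e rest]]]]]; exists d', j', i.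
by do 2!split=> //; exact: rst_trans cc' c'e.
Qed.

Variable b : mono r.
Hypothesis b_gen : in_Ibeta beta b.

Lemma arrow_descends d j :
  is_arrow beta (d, j) -> mdivides b d ->
  equiv_zero beta (d, j) \/
  exists j1 : mono r, j1 \in beta /\ tequiv beta (d, j) (b, j1).
Proof.
have [n] := ubnP (mdeg d); elim: n => // n IH in d j *.
rewrite ltnS => deg_d arr bd.
have [/existsP [i lt_i]|all_le] := boolP [exists i, b i < d i]; last first.
  right; exists j; split; first by case: arr.
  by rewrite (mdivides_anti bd all_le); exact: rst_refl.
have d_i_gt0 : 0 < d i by exact: leq_ltn_trans lt_i.
have b_dpred := mdivides_predm_strict bd lt_i.
have dpred_notin := in_Ibeta_notin (in_Ibeta_mdivides b_gen b_dpred).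
have [j_i0|j_i_gt0] := posnP (j i).
  by left; exact: equiv_zero_head0 j_i0 d_i_gt0 dpred_notin.
have st := tstep_predm arr dpred_notin d_i_gt0 j_i_gt0.
have arr' : is_arrow beta (predm d i, predm j i) by case: st => _ [].
have deg' := leq_trans (mdeg_predm d_i_gt0) deg_d.
have [z|[j1 [j1_in e]]] := IH _ _ deg' arr' b_dpred.
  by left; exact: equiv_zero_tequiv (rst_step _ _ _ _ st) z.
by right; exists j1; split=> //; exact: rst_trans (rst_step _ _ _ _ st) e.
Qed.

End Arrows.

Theorem lemma4p2 (r : nat) (beta : seq (mono r)) (d j b : mono r) :
  basis_set beta ->
  is_arrow beta (d, j) ->
  min_gen beta b ->
  mdivides b d ->
  equiv_zero beta (d, j) \/
  exists j1 : mono r, j1 \in beta /\ tequiv beta (d, j) (b, j1).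
Proof.
move=> [_ beta_closed] arr [b_gen _].
exact: arrow_descends.
Qed.
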